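(* Let $G=([n],E)$ be a persistent graph and let $a<b<c$ be vertices of a 3-simplex $S\in\Xi(G)$. Then $G$ does not contain any edge $\{x,y\}$ with $a<x<b<y<c$.
   Context: A graph $G=([n],E)$ is persistent if (1) $\{i,i+1\}\in E$ for all $1\le i<n$; (2) (X-property) if $\{a,c\},\{b,d\}\in E$ for $a<b<c<d$ then $\{a,d\}\in E$; (3) (bar-property) for every edge $\{a,b\}\in E$ with $a<b-1$ there is $x$ with $a<x<b$ and $\{a,x\},\{x,b\}\in E$. For a persistent $G$, $\hat G$ is the graph on $\{0,1,\dots,n+1\}$ with edge set $E$ together with all pairs $\{0,i\}$ and $\{n+1,i\}$ ($i\in\{0,\dots,n+1\}$, $i\ne 0$ resp. $i \ne n+1$). For an edge $e=\{v,w\}\in E$ with $v<w$, let $\ell_G(e)=\max\{i : i<v,\ \{i,w\}\in E(\hat G)\}$ and $r_G(e)=\min\{i : w<i,\ \{i,v\}\in E(\hat G)\}$, and $\xi_G(e)=\{\ell_G(e),v,w,r_G(e)\}$. Then $\Xi(G)=\{\xi_G(e): e\in E\}$, a set of 4-element subsets of $\{0,\dots,n+1\}$. *)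

From mathcomp Require Import all_boot.
Set Implicit Arguments. Unset Strict Implicit. Unset Printing Implicit Defensive.

(* A graph on the vertex set [n] = {1,...,n} is given by a boolean relation
   E : rel nat; {i,j} is an edge iff E i j.  We require it to be a simple
   undirected graph on [n]. *)
Definition graph_on (n : nat) (E : rel nat) : Prop :=
  (forall i j, E i j -> E j i) /\
  (forall i, ~~ E i i) /\
  (forall i j, E i j -> 1 <= i <= n).

Definition persistent (n : nat) (E : rel nat) : Prop :=
  graph_on n E /\
  (forall i, 1 <= i -> i < n -> E i i.+1) /\
  (forall a b c d, a < b -> b < c -> c < d -> E a c -> E b d -> E a d) /\
  (forall a b, a < b.-1 -> a < b -> E a b ->
     exists x, [/\ a < x, x < b, E a x & E x b]).

Definition hatE (n : nat) (E : rel nat) : rel nat := fun i j =>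
  [&& i != j, i <= n.+1, j <= n.+1 &
      [|| i == 0, j == 0, i == n.+1, j == n.+1 | E i j]].

(* l_G(e) = max {i : i < v, {i,w} in E(hat G)}  (the filtered list is increasing) *)
Definition ell (n : nat) (E : rel nat) (v w : nat) : nat :=
  last 0 [seq i <- iota 0 v | hatE n E i w].

(* r_G(e) = min {i : w < i, {i,v} in E(hat G)} ; i ranges over w+1..n+1 *)
Definition rr (n : nat) (E : rel nat) (v w : nat) : nat :=
  head n.+1 [seq i <- iota w.+1 (n.+1 - w) | hatE n E i v].

(* xi_G(e) for e = {v,w}, v < w, as the (4-element) set {l, v, w, r},
   represented by a list; membership is via \in. *)
Definition xi (n : nat) (E : rel nat) (v w : nat) : seq nat :=
  [:: ell n E v w; v; w; rr n E v w].

Definition in_Xi (n : nat) (E : rel nat) (S : seq nat) : Prop :=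
  exists v w, [/\ v < w, E v w & S = xi n E v w].

(* Write xi(v,w) = {l, v, w, r}, so l < v < w < r.  Since every edge of G is an
   edge of hat G, the choice of l and r means that no x with l < x < v is
   adjacent to w and no y with w < y < r is adjacent to v.  An edge nested under
   (l,v,w) or (v,w,r) would produce such an edge together with {v,w} by the
   X-property.  An edge {x,y} with l < x < v and w < y < r is excluded by
   induction on y - x: the bar-property splits it at some z, and every position
   of z gives a shorter edge of the same kind, an edge {v,y} or {x,w}, or a
   nested edge.  The triples (l,v,r) and (l,w,r) reduce to these three cases
   according to the position of the inner endpoint relative to w, resp. v. *)

From mathcomp Require Import all_boot.
From mathcomp Require Import zify.

Lemma last_filter_iota_lt (p : pred nat) x0 k :
  x0 < k -> last x0 [seq j <- iota 0 k | p j] < k.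
Proof.
move=> lt_x0k; have := mem_last x0 [seq j <- iota 0 k | p j].
by rewrite inE mem_filter mem_iota => /orP[/eqP ->|/andP[_]].
Qed.

Lemma last_filter_iota_max (p : pred nat) x0 k i :
  last x0 [seq j <- iota 0 k | p j] < i < k -> ~~ p i.
Proof.
elim: k => [|k IH]; first by lia.
rewrite -[k.+1]addn1 iotaD add0n filter_cat /=.
case pk: (p k) => /=; first by rewrite cats1 last_rcons; lia.
rewrite cats0 => /andP[lt_last lt_ik].
have [->|ne_ik] := eqVneq i k; first by rewrite pk.
by apply: IH; lia.
Qed.

Lemma head_filter_iota_ge (p : pred nat) d m k :
  m <= d -> m <= head d [seq j <- iota m k | p j].
Proof.
case def_s: [seq j <- iota m k | p j] => [//|h s] _ /=.
have : h \in [seq j <- iota m k | p j] by rewrite def_s mem_head.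
by rewrite mem_filter mem_iota => /andP[_ /andP[]].
Qed.

Lemma head_filter_iota_min (p : pred nat) d m k i :
  d <= m + k -> m <= i -> i < head d [seq j <- iota m k | p j] -> ~~ p i.
Proof.
elim: k m => [|k IH] m /=; first by lia.
case pm: (p m) => /= le_d le_mi lt_ih; first by lia.
have [->|ne_im] := eqVneq i m; first by rewrite pm.
by apply: (IH m.+1) => //; lia.
Qed.

Section HatGraph.

Context {n : nat} {E : rel nat}.
Hypothesis graphE : graph_on n E.

Lemma graph_on_range {i j} : E i j -> (1 <= i <= n) && (1 <= j <= n).
Proof.
have [symE [_ rangeE]] := graphE.
by move=> Eij; rewrite (rangeE i j Eij) (rangeE j i (symE i j Eij)).
Qed.

Lemma hatE_edge {i j} : E i j -> hatE n E i j.
Proof.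
move=> Eij; have /andP[/andP[_ le_in] /andP[_ le_jn]] := graph_on_range Eij.
have ne_ij : i != j by apply: contraTneq Eij => ->; exact: graphE.2.1.
by rewrite /hatE ne_ij Eij !orbT !andbT; lia.
Qed.

Lemma ell_lt v w : 0 < v -> ell n E v w < v.
Proof. exact: last_filter_iota_lt. Qed.

Lemma rr_gt v w : w <= n -> w < rr n E v w.
Proof. exact: (@head_filter_iota_ge _ n.+1 w.+1). Qed.

Lemma ell_max v w i : ell n E v w < i < v -> ~~ E i w.
Proof.
by move=> /last_filter_iota_max no_hat; apply: contra no_hat; apply: hatE_edge.
Qed.

Lemma rr_min v w i : w < i < rr n E v w -> ~~ E v i.
Proof.
move=> /andP[lt_wi lt_ir].
have no_hat := @head_filter_iota_min (hatE n E ^~ v) n.+1 w.+1 (n.+1 - w) i.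
apply: contra (no_hat ltac:(lia) lt_wi lt_ir) => Evi.
by apply: hatE_edge; have [symE _] := graphE; apply: symE.
Qed.

End HatGraph.

Section SimplexEmptiness.

Context {E : rel nat}.
Hypothesis X_property :
  forall a b c d, a < b -> b < c -> c < d -> E a c -> E b d -> E a d.
Hypothesis bar_property :
  forall a b, a < b.-1 -> a < b -> E a b ->
    exists x, [/\ a < x, x < b, E a x & E x b].

Context {l v w r : nat}.
Hypotheses (lt_lv : l < v) (lt_vw : v < w) (lt_wr : w < r) (Evw : E v w).
Hypothesis no_edge_to_w : forall i, l < i < v -> ~~ E i w.
Hypothesis no_edge_from_v : forall i, w < i < r -> ~~ E v i.

Lemma no_edge_nested_left x y : l < x < v -> v < y < w -> ~~ E x y.
Proof.
move=> lx vy; apply: contra (no_edge_to_w _ lx) => Exy.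
by apply: (X_property x v y w _ _ _ Exy Evw); lia.
Qed.

Lemma no_edge_nested_right x y : v < x < w -> w < y < r -> ~~ E x y.
Proof.
move=> vx wy; apply: contra (no_edge_from_v _ wy) => Exy.
by apply: (X_property v x w y _ _ _ Evw Exy); lia.
Qed.

Lemma no_edge_outer x y : l < x < v -> w < y < r -> ~~ E x y.
Proof.
have [k] := ubnP (y - x); elim: k x y => // k IH x y lt_yx lx wy.
apply/negP => Exy.
have [z [lt_xz lt_zy Exz Ezy]] := bar_property x y ltac:(lia) ltac:(lia) Exy.
have [lt_zv|lt_vz|eq_zv] := ltngtP z v.
- by move: Ezy; apply/negP/IH; lia.
- have [lt_zw|lt_wz|eq_zw] := ltngtP z w.
  + by move: Exz; apply/negP/no_edge_nested_left; lia.
  + by move: Exz; apply/negP/IH; lia.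
  + by move: Exz; rewrite eq_zw; apply/negP/no_edge_to_w.
- by move: Ezy; rewrite eq_zv; apply/negP/no_edge_from_v.
Qed.

Lemma no_edge_under_triple {a b c} :
  a \in [:: l; v; w; r] -> b \in [:: l; v; w; r] -> c \in [:: l; v; w; r] ->
  a < b -> b < c -> forall x y, a < x < b -> b < y < c -> ~~ E x y.
Proof.
rewrite !inE => /or4P[] /eqP-> /or4P[] /eqP-> /or4P[] /eqP-> //; try lia.
- by move=> _ _ x y; apply: no_edge_nested_left.
- move=> _ _ x y lx vy; have [lt_yw|lt_wy|->] := ltngtP y w.
  + by apply: no_edge_nested_left; lia.
  + by apply: no_edge_outer; lia.
  + exact: no_edge_to_w.
- move=> _ _ x y lx wy; have [lt_xv|lt_vx|->] := ltngtP x v.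
  + by apply: no_edge_outer; lia.
  + by apply: no_edge_nested_right; lia.
  + exact: no_edge_from_v.
- by move=> _ _ x y; apply: no_edge_nested_right.
Qed.

End SimplexEmptiness.

Theorem lemma10 (n : nat) (E : rel nat) (S : seq nat) (a b c : nat) :
  persistent n E -> in_Xi n E S ->
  a \in S -> b \in S -> c \in S -> a < b -> b < c ->
  forall x y, E x y -> ~ [/\ a < x, x < b, b < y & y < c].
Proof.
move=> [graphE [_ [X_property bar_property]]] [v [w [lt_vw Evw ->]]].
move=> Sa Sb Sc lt_ab lt_bc x y Exy [lt_ax lt_xb lt_by lt_yc].
have /andP[/andP[v_gt0 _] /andP[_ le_wn]] := graph_on_range graphE Evw.
have no_edge := no_edge_under_triple X_property bar_property
  (ell_lt v w v_gt0) lt_vw (rr_gt v w le_wn) Evw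
  (ell_max graphE v w) (rr_min graphE v w) Sa Sb Sc lt_ab lt_bc.
by move: Exy; apply/negP/no_edge; apply/andP.
Qed.
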